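(* Let $(R,\mathfrak{m})$ be a one-dimensional Cohen–Macaulay local ring, let $J$ be a regular ideal with a principal reduction $(x)$, and let $I=\operatorname{tr}(J)$. Consider the conditions: (1) $I\cong I^2$; (2) $I=(x):_R J$; (3) $I\cong(x):_R J$; (4) $I\cong J^*$. Then (1) implies (2), and (2), (3), (4) are equivalent.
   Context: $J^*=\operatorname{Hom}_R(J,R)$ and $\operatorname{tr}(J)$ is the image of $J\otimes_R J^*\to R$, $a\otimes\alpha\mapsto\alpha(a)$. An ideal is regular if it contains a nonzerodivisor. A principal reduction of $J$ is a principal ideal $(x)\subseteq J$ with $xJ^n=J^{n+1}$ for some $n$. *)

From mathcomp Require Import all_boot all_algebra.
Set Implicit Arguments. Unset Strict Implicit. Unset Printing Implicit Defensive.
Import GRing.Theory.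
Local Open Scope ring_scope.

(* Ideals of a commutative ring R are represented as predicates R -> Prop. *)
Section Defs.
Variable R : comUnitRingType.

Definition is_ideal (J : R -> Prop) : Prop :=
  [/\ J 0, (forall a b, J a -> J b -> J (a + b)) & (forall r a, J a -> J (r * a))].

Definition fg_ideal (J : R -> Prop) : Prop :=
  exists s : seq R, forall r,
    J r <-> exists c : seq R, size c = size s /\ r = \sum_(i < size s) c`_i * s`_i.

Definition noetherian : Prop := forall J, is_ideal J -> fg_ideal J.

(* local ring: the non-units form an ideal (the maximal ideal) *)
Definition local_ring : Prop :=
  forall a b : R, a \isn't a GRing.unit -> b \isn't a GRing.unit ->
    (a + b) \isn't a GRing.unit.

Definition max_ideal (r : R) : Prop := r \isn't a GRing.unit.

Definition prime_ideal (P : R -> Prop) : Prop :=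
  [/\ is_ideal P, ~ P 1 & forall a b, P (a * b) -> P a \/ P b].

Definition strict_sub (P Q : R -> Prop) : Prop :=
  (forall r, P r -> Q r) /\ exists r, Q r /\ ~ P r.

Definition krull_dim_one : Prop :=
  (exists P Q, prime_ideal P /\ prime_ideal Q /\ strict_sub P Q) /\
  ~ (exists P0 P1 P2, [/\ prime_ideal P0, prime_ideal P1, prime_ideal P2,
        strict_sub P0 P1 & strict_sub P1 P2]).

Definition nzd (a : R) : Prop := forall b, a * b = 0 -> b = 0.

Definition depth_pos : Prop := exists a, max_ideal a /\ nzd a.

(* one-dimensional Cohen--Macaulay local ring: depth = dim = 1 *)
Definition CM_local_dim_one : Prop :=
  [/\ noetherian, local_ring, krull_dim_one & depth_pos].

Definition regular_ideal (J : R -> Prop) : Prop := exists a, J a /\ nzd a.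

Definition ideal_mul (I K : R -> Prop) (r : R) : Prop :=
  exists s : seq (R * R),
    (forall p, p \in s -> I p.1 /\ K p.2) /\ r = \sum_(p <- s) p.1 * p.2.

Fixpoint ideal_pow (J : R -> Prop) (n : nat) : R -> Prop :=
  match n with
  | 0%N => fun _ => True
  | n.+1 => ideal_mul (ideal_pow J n) J
  end.

Definition principal (x : R) (r : R) : Prop := exists s, r = s * x.

Definition principal_reduction (x : R) (J : R -> Prop) : Prop :=
  J x /\ exists n : nat, forall r, ideal_pow J n.+1 r <-> exists y, ideal_pow J n y /\ r = x * y.

Definition colon (I J : R -> Prop) (r : R) : Prop := forall j, J j -> I (r * j).

(* R-linear maps J -> R (elements of J^* = Hom_R(J,R)), given by their values on J *)
Definition hom_to_R (J : R -> Prop) (f : R -> R) : Prop :=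
  (forall a b, J a -> J b -> f (a + b) = f a + f b) /\
  (forall r a, J a -> f (r * a) = r * f a).

(* trace ideal: image of J ⊗ J^* -> R, a ⊗ α ↦ α(a) *)
Definition trace_ideal (J : R -> Prop) (r : R) : Prop :=
  exists s : seq (R * (R -> R)),
    (forall i, (i < size s)%N -> J (nth (0, fun _ => 0) s i).1 /\
                                 hom_to_R J (nth (0, fun _ => 0) s i).2) /\
    r = \sum_(i < size s) (nth (0, fun _ => 0) s i).2 (nth (0, fun _ => 0) s i).1.

Definition ideal_iso (I K : R -> Prop) : Prop :=
  exists f : R -> R,
    [/\ forall a b, I a -> I b -> f (a + b) = f a + f b,
        forall r a, I a -> f (r * a) = r * f a,
        forall a, I a -> K (f a),
        forall a b, I a -> I b -> f a = f b -> a = b &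
        forall c, K c -> exists a, I a /\ f a = c].

(* isomorphism of R-modules  I ≅ J^* = Hom_R(J,R); homs are compared by
   their values on J *)
Definition iso_dual (I J : R -> Prop) : Prop :=
  exists Phi : R -> R -> R,
    [/\ forall a, I a -> hom_to_R J (Phi a),
        forall a b, I a -> I b -> forall j, J j -> Phi (a + b) j = Phi a j + Phi b j,
        forall r a, I a -> forall j, J j -> Phi (r * a) j = r * Phi a j,
        forall a b, I a -> I b -> (forall j, J j -> Phi a j = Phi b j) -> a = b &
        forall f, hom_to_R J f -> exists a, I a /\ forall j, J j -> Phi a j = f j].

Definition ideal_eq (I K : R -> Prop) : Prop := forall r, I r <-> K r.

End Defs.

From mathcomp Require Import all_boot all_algebra perm ring.
From Stdlib Require Import ClassicalEpsilon.
Set Implicit Arguments. Unset Strict Implicit. Unset Printing Implicit Defensive.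
Import GRing.Theory.
Local Open Scope ring_scope.

(* Write C = (x) :_R J.  A map f in J^* is determined by f x in C, since
   f j = j (f x) / x; hence J^* ~ C and x I = J C.  An isomorphism between
   ideals containing a nonzerodivisor is multiplication by a fraction, so
   I ~ C means I = (x/a) C, hence J C = x I = (x^2/a) C; comparing
   J^(n+1) C = (x^2/a)^(n+1) C with x J^n C = x (x^2/a)^n C gives
   (x^2/a) C = x C, i.e. x I = x C and I = C.  If I ~ I^2, then I^2 = u I
   and the determinant trick puts u in I; C is stable under I/u, and
   x^(n+1) I^(n+1) = J^(n+1) C^(n+1) = x^(n+1) I^n C gives
   u^n I = I^(n+1) <= I^n C <= u^n C, so again I = C. *)

(** * Nonzerodivisors and products of ideals *)

Section IdealArithmetic.
Variable R : comUnitRingType.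
Implicit Types (P Q S M T K L : R -> Prop) (a b c d k x : R).

Lemma nzdM a b : nzd a -> nzd b -> nzd (a * b).
Proof. by move=> na nb e; rewrite -mulrA => /na /nb. Qed.

Lemma nzdX a n : nzd a -> nzd (a ^+ n).
Proof.
move=> na; elim: n => [|n IHn]; first by move=> e; rewrite expr0 mul1r.
by rewrite exprS; apply: nzdM.
Qed.

Lemma nzdMl a b : nzd (a * b) -> nzd a.
Proof. by move=> nab e ae; apply: nab; rewrite mulrAC ae mul0r. Qed.

Lemma nzdMr a b : nzd (a * b) -> nzd b.
Proof. by rewrite mulrC; apply: nzdMl. Qed.

Lemma nzd_mulI a : nzd a -> injective ( *%R a).
Proof.
by move=> na u v /= E; apply/eqP; rewrite -subr_eq0; apply/eqP/na; rewrite mulrBr E subrr.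
Qed.

Definition ideal_le P Q := forall r, P r -> Q r.

Definition sum_closed T := T 0 /\ (forall u v, T u -> T v -> T (u + v)).

Lemma ideal_sum_closed P : is_ideal P -> sum_closed P.
Proof. by case. Qed.

Lemma ideal_mul_le P Q T : sum_closed T ->
  (forall p q, P p -> Q q -> T (p * q)) -> ideal_le (ideal_mul P Q) T.
Proof.
move=> [T0 TD] Tgen _ [s [Ps ->]]; elim: s Ps => [|p s IHs] Ps; first by rewrite big_nil.
rewrite big_cons; apply: TD; last by apply: IHs => q qs; apply: Ps; rewrite inE qs orbT.
by have [] := Ps p (mem_head _ _); apply: Tgen.
Qed.

Lemma ideal_mul_gen P Q p q : P p -> Q q -> ideal_mul P Q (p * q).
Proof.
move=> Pp Qq; exists [:: (p, q)]; split; last by rewrite big_seq1.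
by move=> r; rewrite inE => /eqP ->.
Qed.

Lemma ideal_mul_sum_closed P Q : sum_closed (ideal_mul P Q).
Proof.
split; first by exists [::]; split => //; rewrite big_nil.
move=> _ _ [s [Ps ->]] [t [Pt ->]]; exists (s ++ t); split; last by rewrite big_cat.
by move=> r; rewrite mem_cat => /orP [] ?; [apply: Ps | apply: Pt].
Qed.

Lemma sum_closed_mull T a : sum_closed T -> sum_closed (fun m => T (a * m)).
Proof. by case=> T0 TD; split=> [|u v]; rewrite ?mulr0 ?mulrDr //; apply: TD. Qed.

Lemma sum_closed_mulr T a : sum_closed T -> sum_closed (fun m => T (m * a)).
Proof. by case=> T0 TD; split=> [|u v]; rewrite ?mul0r ?mulrDl //; apply: TD. Qed.

Lemma ideal_mulS P P' Q Q' : ideal_le P P' -> ideal_le Q Q' ->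
  ideal_le (ideal_mul P Q) (ideal_mul P' Q').
Proof.
move=> PP' QQ'; apply: ideal_mul_le; first exact: ideal_mul_sum_closed.
by move=> p q /PP' Pp /QQ' Qq; apply: ideal_mul_gen.
Qed.

Lemma ideal_mulACA P Q P' Q' :
  ideal_le (ideal_mul (ideal_mul P Q) (ideal_mul P' Q'))
           (ideal_mul (ideal_mul P P') (ideal_mul Q Q')).
Proof.
have cl := @ideal_mul_sum_closed (ideal_mul P P') (ideal_mul Q Q').
apply: ideal_mul_le => // u v Hu Hv.
apply: (ideal_mul_le (sum_closed_mulr v cl) _ Hu) => p q Pp Qq.
apply: (ideal_mul_le (sum_closed_mull (p * q) cl) _ Hv) => p' q' Pp' Qq'.
by rewrite mulrACA; apply: ideal_mul_gen; apply: ideal_mul_gen.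
Qed.

Lemma ideal_mulA P Q S :
  ideal_eq (ideal_mul P (ideal_mul Q S)) (ideal_mul (ideal_mul P Q) S).
Proof.
move=> r; split.
  have cl := @ideal_mul_sum_closed (ideal_mul P Q) S.
  apply: ideal_mul_le => // p m Pp Hm.
  apply: (ideal_mul_le (sum_closed_mull p cl) _ Hm) => q s Qq Ss.
  by rewrite mulrA; apply: ideal_mul_gen => //; apply: ideal_mul_gen.
have cl := @ideal_mul_sum_closed P (ideal_mul Q S).
apply: ideal_mul_le => // m s Hm Ss.
apply: (ideal_mul_le (sum_closed_mulr s cl) _ Hm) => p q Pp Qq.
by rewrite -mulrA; apply: ideal_mul_gen => //; apply: ideal_mul_gen.
Qed.

Lemma ideal_pow_mul P Q n :
  ideal_eq (ideal_pow (ideal_mul P Q) n) (ideal_mul (ideal_pow P n) (ideal_pow Q n)).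
Proof.
elim: n => [|n IHn] r /=.
  by split=> // _; rewrite -[r]mulr1; apply: ideal_mul_gen.
split=> Hr.
  by apply: ideal_mulACA; apply: ideal_mulS Hr => // m /IHn.
by move: (ideal_mulACA Hr); apply: ideal_mulS => // m /IHn.
Qed.

Lemma ideal_pow_exp P a n : P a -> ideal_pow P n (a ^+ n).
Proof. by move=> Pa; elim: n => [//|n IHn] /=; rewrite exprSr; apply: ideal_mul_gen. Qed.

Lemma ideal_mul_pow0 P M : is_ideal M -> ideal_eq (ideal_mul (ideal_pow P 0) M) M.
Proof.
move=> M_ideal r; split; last by move=> Mr; rewrite -[r]mul1r; apply: ideal_mul_gen.
have [_ _ MM] := M_ideal.
by apply: ideal_mul_le (ideal_sum_closed M_ideal) _ r => p m _; apply: MM.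
Qed.

(** * Scaled inclusions *)

(* [scaled_le a P b Q] stands for the inclusion (a/b) P <= Q of fractional ideals. *)
Definition scaled_le a P b Q := forall p, P p -> exists2 q, Q q & a * p = b * q.

Lemma scaled_le_refl a P : scaled_le a P a P.
Proof. by move=> p Pp; exists p. Qed.

Lemma scaled_le1 P Q : scaled_le 1 P 1 Q -> ideal_le P Q.
Proof. by move=> PQ p /PQ [q Qq]; rewrite !mul1r => ->. Qed.

Lemma scaled_leW P P' Q Q' a b : ideal_le P' P -> ideal_le Q Q' ->
  scaled_le a P b Q -> scaled_le a P' b Q'.
Proof. by move=> P'P QQ' PQ p /P'P /PQ [q /QQ' Q'q E]; exists q. Qed.

Lemma scaled_le_trans a b c d P Q S :
  scaled_le a P b Q -> scaled_le c Q d S -> scaled_le (a * c) P (b * d) S.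
Proof.
move=> PQ QS p /PQ [q /QS [s Ss Eq] Ep]; exists s => //.
by rewrite mulrAC Ep -[_ * c]mulrA (mulrC q) Eq mulrA.
Qed.

Lemma scaled_leZ k a b P Q : scaled_le a P b Q -> scaled_le (k * a) P (k * b) Q.
Proof. by move=> PQ p /PQ [q Qq E]; exists q; rewrite // -!mulrA E. Qed.

Lemma scaled_le_cancel k a b P Q : nzd k ->
  scaled_le (k * a) P (k * b) Q -> scaled_le a P b Q.
Proof. by move=> nk PQ p /PQ [q Qq E]; exists q => //; apply: (nzd_mulI nk); rewrite /= !mulrA. Qed.

Lemma sum_closed_scaled a b S : sum_closed S ->
  sum_closed (fun m => exists2 s, S s & a * m = b * s).
Proof.
case=> S0 SD; split; first by exists 0; rewrite ?mulr0.
move=> u v [s Ss Eu] [t St Ev]; exists (s + t); first exact: SD.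
by rewrite !mulrDr Eu Ev.
Qed.

Lemma scaled_le_ideal_mul a b P Q S : sum_closed S ->
  (forall p q, P p -> Q q -> exists2 s, S s & a * (p * q) = b * s) ->
  scaled_le a (ideal_mul P Q) b S.
Proof. by move=> /(sum_closed_scaled a b); apply: ideal_mul_le. Qed.

Lemma scaled_le_mul a b c d P Q P' Q' :
  scaled_le a P b Q -> scaled_le c P' d Q' ->
  scaled_le (a * c) (ideal_mul P P') (b * d) (ideal_mul Q Q').
Proof.
move=> PQ P'Q'; apply: scaled_le_ideal_mul; first exact: ideal_mul_sum_closed.
move=> p p' /PQ [q Qq Eq] /P'Q' [q' Qq' Eq']; exists (q * q'); first exact: ideal_mul_gen.
by rewrite mulrACA Eq Eq' mulrACA.
Qed.

Lemma scaled_le_mull a b P Q S :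
  scaled_le a P b Q -> scaled_le a (ideal_mul S P) b (ideal_mul S Q).
Proof. by move=> /(scaled_le_mul (scaled_le_refl 1 (P := S))); rewrite !mul1r. Qed.

Lemma scaled_le_mulr a b P Q S :
  scaled_le a P b Q -> scaled_le a (ideal_mul P S) b (ideal_mul Q S).
Proof. by move=> /scaled_le_mul /(_ (scaled_le_refl 1 (P := S))); rewrite !mulr1. Qed.

Lemma scaled_le_pow a b P Q n :
  scaled_le a P b Q -> scaled_le (a ^+ n) (ideal_pow P n) (b ^+ n) (ideal_pow Q n).
Proof.
move=> PQ; elim: n => [|n IHn]; first by move=> p _; exists p; rewrite ?expr0.
by rewrite !exprSr; apply: scaled_le_mul.
Qed.

Lemma scaled_le_pow_mul_l a b P M n : is_ideal M ->
  scaled_le a (ideal_mul P M) b M ->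
  scaled_le (a ^+ n) (ideal_mul (ideal_pow P n) M) (b ^+ n) M.
Proof.
move=> M_ideal PMM; elim: n => [|n IHn].
  rewrite !expr0; apply: scaled_leW (scaled_le_refl 1 (P := M)) => //.
  by move=> r /(ideal_mul_pow0 P M_ideal).
rewrite !exprS; apply: scaled_le_trans _ IHn.
by apply: scaled_leW (scaled_le_mull (S := ideal_pow P n) PMM) => // r /= /ideal_mulA.
Qed.

Lemma scaled_le_pow_mul_r a b P M n : is_ideal M ->
  scaled_le b M a (ideal_mul P M) ->
  scaled_le (b ^+ n) M (a ^+ n) (ideal_mul (ideal_pow P n) M).
Proof.
move=> M_ideal MPM; elim: n => [|n IHn].
  rewrite !expr0; apply: scaled_leW (scaled_le_refl 1 (P := M)) => //.
  by move=> r /(ideal_mul_pow0 P M_ideal).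
rewrite !exprSr; apply: scaled_le_trans IHn _.
by apply: scaled_leW (scaled_le_mull (S := ideal_pow P n) MPM) => // r /ideal_mulA.
Qed.

Lemma ideal_eq_iso K L : ideal_eq K L -> ideal_iso K L.
Proof. by move=> KL; exists id; split=> // [a /KL | c /KL Kc]; last exists c. Qed.

Lemma ideal_iso_scaled K L x : is_ideal K -> K x -> nzd x -> ideal_iso K L ->
  exists a, [/\ nzd a, scaled_le a K x L & scaled_le x L a K].
Proof.
move=> [K0 _ KM] Kx nx [g [_ gM gL g_inj g_onto]].
have gx i : K i -> x * g i = g x * i.
  by move=> Ki; rewrite -gM // mulrC gM // mulrC.
have g0 : g 0 = 0 by have := gM 0 0 K0; rewrite !mul0r.
exists (g x); split.
- move=> b gxb; apply: nx; rewrite mulrC; apply: g_inj; [exact: KM | done |].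
  by rewrite gM // mulrC gxb g0.
- by move=> i Ki; exists (g i); [apply: gL | rewrite gx].
- by move=> c /g_onto [i [Ki <-]]; exists i; rewrite // gx.
Qed.

End IdealArithmetic.

(** * The determinant trick *)

Section DeterminantTrick.
Variable R : comUnitRingType.
Implicit Types (P : R -> Prop) (X d : R).

Lemma det_eq0_of_kernel N (M : 'M[R]_N) (s : 'cV[R]_N) (c : 'I_N -> R) :
  M *m s = 0 -> nzd (\sum_i c i * s i 0) -> \det M = 0.
Proof.
move=> Ms0 ny; apply: ny; rewrite mulr_suml big1 // => i _.
have : (\det M *: s) i 0 = 0 by rewrite -mul_scalar_mx -mul_adj_mx -mulmxA Ms0 mulmx0 mxE.
by rewrite mxE -mulrA mulrC => ->; rewrite mulr0.
Qed.

Lemma fg_ideal_span P : fg_ideal P -> exists N (s : 'I_N -> R),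
  (forall i, P (s i)) /\ forall r, P r -> exists c : 'I_N -> R, r = \sum_i c i * s i.
Proof.
move=> [s Hs]; exists (size s), (fun i => s`_i); split; last first.
  by move=> r /Hs [c [_ ->]]; exists (fun i => c`_i).
move=> i; apply/Hs; exists (mkseq (fun j => (j == i :> nat)%:R) (size s)).
split; first by rewrite size_mkseq.
rewrite (bigD1 i) //= nth_mkseq // eqxx mul1r big1 ?addr0 // => j ji.
by rewrite nth_mkseq // val_eqE (negPf ji) mul0r.
Qed.

Lemma ideal_mul_span P N (s : 'I_N -> R) : is_ideal P ->
  (forall r, P r -> exists c : 'I_N -> R, r = \sum_i c i * s i) ->
  ideal_le (ideal_mul P P)
    (fun m => exists2 a : 'I_N -> R, (forall j, P (a j)) & m = \sum_j a j * s j).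
Proof.
move=> [P0 PD PM] span; apply: ideal_mul_le.
  split; first by exists (fun _ => 0) => //; rewrite big1 // => j _; rewrite mul0r.
  move=> _ _ [a Pa ->] [b Pb ->]; exists (fun j => a j + b j); first by move=> j; apply: PD.
  by rewrite -big_split; apply: eq_bigr => j _; rewrite mulrDl.
move=> p q Pp /span [c ->]; exists (fun j => p * c j); first by move=> j; rewrite mulrC; apply: PM.
by rewrite mulr_sumr; apply: eq_bigr => j _; rewrite mulrA.
Qed.

(* With u = X/d the hypothesis reads u^-1 P^2 <= P.  In the Leibniz expansion
   of det (u - A), A with entries in P, every term but u^N has the form
   u^(N-k) c with c in P^k, and u^(1-k) P^k <= P; multiplying through by X^N
   keeps all of this inside R. *)
Section Expansion.
Variables (P : R -> Prop) (X d : R).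
Hypotheses (P_ideal : is_ideal P) (PP_le : scaled_le d (ideal_mul P P) X P).

Lemma prod_expand (T : Type) (r : seq T) (c a : T -> R) : (forall t, P (a t)) ->
  exists2 i, P i & X * \prod_(t <- r) (X * c t - d * a t) =
                   X ^+ (size r).+1 * \prod_(t <- r) c t + d * X ^+ size r * i.
Proof.
move=> Pa; have [P0 PD PM] := P_ideal.
elim: r => [|t r [i Pi E]]; first by exists 0; rewrite // !big_nil; ring.
have [i' Pi' Ei'] := PP_le (ideal_mul_gen (Pa t) Pi).
exists (c t * i - a t * \prod_(t <- r) c t - i').
  apply: (PD); last by rewrite -mulN1r; apply: PM.
  by apply: (PD); [apply: PM | rewrite -mulrN mulrC; apply: PM].
rewrite !big_cons /=; move: E Ei'; set p := \prod_(t <- r) _; set q := \prod_(t <- r) _ => E Ei'.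
have -> : X * ((X * c t - d * a t) * p) = (X * c t - d * a t) * (X * p) by ring.
rewrite E !exprS.
have -> : (X * c t - d * a t) * (X * X ^+ size r * q + d * X ^+ size r * i) =
  X * (X * X ^+ size r) * (c t * q) + d * (X * X ^+ size r) * (c t * i - a t * q)
  - d * X ^+ size r * (d * (a t * i)) by ring.
by rewrite Ei'; ring.
Qed.

Lemma det_expand N (A : 'M[R]_N) : (forall i j, P (A i j)) ->
  exists k, exists2 i, P i & X * \det (X%:M - d *: A) = X ^+ k.+1 + d * X ^+ k * i.
Proof.
move=> PA; have [P0 PD PM] := P_ideal.
pose k := size (index_enum 'I_N); exists k.
suff [i Pi E] : exists2 i, P i &
    X * \det (X%:M - d *: A) - X ^+ k.+1 * \det (1%:M : 'M[R]_N) = d * X ^+ k * i.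
  by exists i => //; rewrite -E det1 mulr1 [RHS]addrC subrK.
rewrite /determinant !mulr_sumr -sumrB.
apply: (big_ind (fun t => exists2 i, P i & t = d * X ^+ k * i)).
- by exists 0; rewrite ?mulr0.
- by move=> u v [a Pa ->] [b Pb ->]; exists (a + b); [apply: PD | rewrite mulrDr].
move=> sg _.
have [i Pi Ei] := @prod_expand _ (index_enum 'I_N) (fun i => (i == (sg : 'S_N) i)%:R)
  (fun i => A i ((sg : 'S_N) i)) (fun i => PA i ((sg : 'S_N) i)).
exists ((-1) ^+ sg * i); first exact: PM.
have E1 i1 : (X%:M - d *: A) i1 (sg i1) = X * (i1 == sg i1)%:R - d * A i1 (sg i1).
  by rewrite !mxE mulr_natr.
have E2 i1 : (1%:M : 'M[R]_N) i1 (sg i1) = (i1 == sg i1)%:R by rewrite !mxE.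
under eq_bigr do rewrite E1.
under [in X in _ - X]eq_bigr do rewrite E2.
rewrite mulrCA Ei -/k.
move: ((-1) ^+ sg) (\prod_(t <- _) _) => sgn pp.
ring.
Qed.

End Expansion.

Lemma determinant_trick P X d : is_ideal P -> fg_ideal P -> regular_ideal P -> nzd X ->
  scaled_le X P d (ideal_mul P P) -> scaled_le d (ideal_mul P P) X P ->
  exists2 u, P u & X = d * u.
Proof.
move=> P_ideal /fg_ideal_span [N [s [Ps span]]] [y [Py ny]] nX XPP PPX.
have [_ _ PM] := P_ideal.
have [A PA As] : exists2 A : 'M[R]_N, (forall i j, P (A i j)) &
    forall i, X * s i = d * \sum_j A i j * s j.
  have /fin_all_exists [a Ha] : forall i, exists a : 'I_N -> R,
      (forall j, P (a j)) /\ X * s i = d * \sum_j a j * s j.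
    move=> i; have [m PPm ->] := XPP _ (Ps i).
    by have [a Pa ->] := ideal_mul_span P_ideal span PPm; exists a.
  exists (\matrix_(i, j) a i j) => [i j|i]; rewrite ?mxE; first by case: (Ha i).
  by case: (Ha i) => _ ->; congr (_ * _); apply: eq_bigr => j _; rewrite mxE.
have det0 : \det (X%:M - d *: A) = 0.
  have [c Ey] := span y Py.
  apply: (@det_eq0_of_kernel _ _ (\col_i s i) c).
    apply/matrixP => i k; rewrite mulmxBl mul_scalar_mx -scalemxAl !mxE.
    under eq_bigr do rewrite !mxE.
    by rewrite As subrr.
  by under eq_bigr do rewrite mxE; rewrite -Ey.
have [k [i Pi]] := det_expand P_ideal PPX PA.
rewrite det0 mulr0 => /eqP; rewrite eq_sym addr_eq0 => /eqP Xk.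
exists (- i); first by rewrite -mulN1r; apply: PM.
by apply: (nzd_mulI (nzdX (n := k) nX)); rewrite /= -exprSr Xk; ring.
Qed.

End DeterminantTrick.

(** * Trace ideals and the colon ideal *)

Section TraceIdeal.
Variables (R : comUnitRingType) (J : R -> Prop).

Let hom0 : R * (R -> R) := (0, fun _ => 0).

Lemma trace_sum_cons (p : R * (R -> R)) s :
  \sum_(i < size (p :: s)) (nth hom0 (p :: s) i).2 (nth hom0 (p :: s) i).1 =
  p.2 p.1 + \sum_(i < size s) (nth hom0 s i).2 (nth hom0 s i).1.
Proof. by rewrite /= big_ord_recl /=; congr (_ + _); apply: eq_bigr => i _; rewrite lift0. Qed.

Lemma trace_ideal_le (T : R -> Prop) : sum_closed T ->
  (forall a f, J a -> hom_to_R J f -> T (f a)) -> ideal_le (trace_ideal J) T.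
Proof.
move=> [T0 TD] Tgen _ [s [Hs ->]]; elim: s Hs => [|p s IHs] Hs; first by rewrite big_ord0.
rewrite trace_sum_cons; apply: TD; first by have [] := Hs 0%N isT; apply: Tgen.
by apply: IHs => i; apply: (Hs i.+1).
Qed.

Lemma trace_ideal0 : trace_ideal J 0.
Proof. by exists [::]; split => //; rewrite big_ord0. Qed.

Lemma trace_ideal_cons r a f : trace_ideal J r -> J a -> hom_to_R J f ->
  trace_ideal J (f a + r).
Proof.
move=> [s [Hs ->]] Ja Hf; exists ((a, f) :: s); split; last by rewrite trace_sum_cons.
by case=> [|i] //= Hi; apply: Hs.
Qed.

Lemma trace_ideal_gen a f : J a -> hom_to_R J f -> trace_ideal J (f a).
Proof.
by move=> Ja Hf; rewrite -[f a]addr0; apply: trace_ideal_cons => //; apply: trace_ideal0.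
Qed.

Lemma trace_sum_closed : sum_closed (trace_ideal J).
Proof.
split=> [|u v Hu]; first exact: trace_ideal0.
move: v; apply: (trace_ideal_le
  (T := fun u => forall v, trace_ideal J v -> trace_ideal J (u + v))) Hu.
  split=> [v|u1 u2 H1 H2 v Hv]; first by rewrite add0r.
  by rewrite -addrA; apply/H1/H2.
by move=> a f Ja Hf v Hv; apply: trace_ideal_cons.
Qed.

Lemma trace_is_ideal : is_ideal J -> is_ideal (trace_ideal J).
Proof.
move=> [_ _ JM]; have [tr0 trD] := trace_sum_closed; split=> // r t.
apply: trace_ideal_le (sum_closed_mull r trace_sum_closed) _ t => a f Ja Hf.
have [_ fZ] := Hf; rewrite -fZ //.
by apply: trace_ideal_gen => //; apply: JM.
Qed.

Lemma ideal_le_trace : ideal_le J (trace_ideal J).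
Proof. by move=> a Ja; apply: (trace_ideal_gen (f := id)). Qed.

End TraceIdeal.

Lemma principal_is_ideal (R : comUnitRingType) (x : R) : is_ideal (principal x).
Proof.
split=> [|_ _ [a ->] [b ->]|r _ [a ->]]; first by exists 0; rewrite mul0r.
  by exists (a + b); rewrite mulrDl.
by exists (r * a); rewrite mulrA.
Qed.

Lemma colon_is_ideal (R : comUnitRingType) (P Q : R -> Prop) :
  is_ideal P -> is_ideal (colon P Q).
Proof.
move=> [P0 PD PM]; split=> [j _|a b Ha Hb j Qj|r a Ha j Qj]; first by rewrite mul0r.
  by rewrite mulrDl; apply: PD; [apply: Ha | apply: Hb].
by rewrite -mulrA; apply: PM; apply: Ha.
Qed.

Section ColonTrace.
Variables (R : comUnitRingType) (J : R -> Prop) (x : R).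
Hypotheses (J_ideal : is_ideal J) (Jx : J x) (x_nzd : nzd x).
Local Notation I := (trace_ideal J).
Local Notation C := (colon (principal x) J).

(* [colon_hom c] is j |-> c j / x; together with f |-> f x it identifies
   (x) :_R J with J^*. *)
Definition colon_hom (c : R) (j : R) : R := epsilon (inhabits 0) (fun r => c * j = r * x).

Lemma colon_homP c j : C c -> J j -> c * j = colon_hom c j * x.
Proof. by move=> Cc Jj; apply: (epsilon_spec (inhabits 0) (fun r => c * j = r * x)); apply: Cc. Qed.

Lemma colon_hom_mulx c j : C c -> J j -> x * colon_hom c j = j * c.
Proof. by move=> Cc Jj; rewrite mulrC -colon_homP // mulrC. Qed.

Lemma nzd_mulIx : injective ( *%R^~ x).
Proof. by move=> u v /= E; apply: (nzd_mulI x_nzd); rewrite /= mulrC E mulrC. Qed.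

Lemma colon_hom_to_R c : C c -> hom_to_R J (colon_hom c).
Proof.
have [_ JD JM] := J_ideal.
move=> Cc; split=> [a b Ja Jb | r a Ja]; apply: nzd_mulIx => /=.
  by rewrite mulrDl -(colon_homP Cc (JD _ _ Ja Jb)) -(colon_homP Cc Ja) -(colon_homP Cc Jb) mulrDr.
by rewrite -mulrA -(colon_homP Cc (JM r _ Ja)) -(colon_homP Cc Ja) mulrCA.
Qed.

Lemma colon_hom_x c : C c -> colon_hom c x = c.
Proof. by move=> Cc; apply: nzd_mulIx; rewrite /= -colon_homP // mulrC. Qed.

Lemma colon_homD c c' j : C c -> C c' -> J j ->
  colon_hom (c + c') j = colon_hom c j + colon_hom c' j.
Proof.
have [_ CD _] := colon_is_ideal J (principal_is_ideal x).
move=> Cc Cc' Jj; apply: nzd_mulIx => /=.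
by rewrite -(colon_homP (CD _ _ Cc Cc') Jj) !mulrDl -(colon_homP Cc Jj) -(colon_homP Cc' Jj).
Qed.

Lemma colon_homZ r c j : C c -> J j -> colon_hom (r * c) j = r * colon_hom c j.
Proof.
have [_ _ CM] := colon_is_ideal J (principal_is_ideal x).
move=> Cc Jj; apply: nzd_mulIx => /=.
by rewrite -(colon_homP (CM r _ Cc) Jj) -[RHS]mulrA -(colon_homP Cc Jj) mulrA.
Qed.

Lemma hom_mulx f j : hom_to_R J f -> J j -> f j * x = j * f x.
Proof. by move=> [_ fZ] Jj; rewrite mulrC -(fZ x j Jj) -(fZ j x Jx) mulrC. Qed.

Lemma hom_x_colon f : hom_to_R J f -> C (f x).
Proof. by move=> Hf j Jj; exists (f j); rewrite hom_mulx // mulrC. Qed.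

Lemma colon_hom_trace c j : C c -> J j -> I (colon_hom c j).
Proof. by move=> Cc Jj; apply: trace_ideal_gen => //; apply: colon_hom_to_R. Qed.

Lemma colon_le_trace : ideal_le C I.
Proof. by move=> c Cc; rewrite -(colon_hom_x Cc); apply: colon_hom_trace. Qed.

Lemma trace_scaled_le_mul_colon : scaled_le x I 1 (ideal_mul J C).
Proof.
apply: trace_ideal_le; first exact/sum_closed_scaled/ideal_mul_sum_closed.
move=> a f Ja Hf; exists (a * f x); first exact: ideal_mul_gen (hom_x_colon Hf).
by rewrite mul1r mulrC hom_mulx.
Qed.

Lemma mul_colon_scaled_le_trace : scaled_le 1 (ideal_mul J C) x I.
Proof.
apply: scaled_le_ideal_mul; first exact: trace_sum_closed.
move=> j c Jj Cc; exists (colon_hom c j); first exact: colon_hom_trace.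
by rewrite mul1r colon_hom_mulx.
Qed.

Lemma ideal_iso_colon_iff_dual (K : R -> Prop) : ideal_iso K C <-> iso_dual K J.
Proof.
split=> [[g [gD gZ gC g_inj g_onto]] | [Phi [Phi_hom PhiD PhiZ Phi_inj Phi_onto]]].
  exists (fun a => colon_hom (g a)); split.
  - by move=> a Ka; apply/colon_hom_to_R/gC.
  - by move=> a b Ka Kb j Jj; rewrite gD // colon_homD //; apply: gC.
  - by move=> r a Ka j Jj; rewrite gZ // colon_homZ //; apply: gC.
  - move=> a b Ka Kb E; apply: g_inj => //.
    by rewrite -(colon_hom_x (gC a Ka)) -(colon_hom_x (gC b Kb)); apply: E.
  - move=> f Hf; have [a [Ka ga]] := g_onto _ (hom_x_colon Hf).
    exists a; split => // j Jj; apply: nzd_mulIx => /=.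
    by rewrite -(colon_homP (gC a Ka) Jj) ga (hom_mulx Hf Jj) mulrC.
exists (fun a => Phi a x); split.
- by move=> a b Ka Kb; apply: PhiD.
- by move=> r a Ka; apply: PhiZ.
- by move=> a Ka; apply/hom_x_colon/Phi_hom.
- move=> a b Ka Kb E; apply: Phi_inj => // j Jj; apply: nzd_mulIx => /=.
  by rewrite (hom_mulx (Phi_hom _ Ka) Jj) (hom_mulx (Phi_hom _ Kb) Jj) E.
- move=> c Cc; have [a [Ka Ha]] := Phi_onto _ (colon_hom_to_R Cc).
  by exists a; split => //; rewrite Ha // colon_hom_x.
Qed.

Lemma trace_mul_colon_le u : nzd u ->
  scaled_le 1 (ideal_mul I I) u I -> scaled_le 1 (ideal_mul I C) u C.
Proof.
move=> nu IIu; apply: scaled_le_ideal_mul.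
  exact/ideal_sum_closed/colon_is_ideal/principal_is_ideal.
move=> i c Ii Cc; have [i' Ii' E] := IIu _ (ideal_mul_gen Ii (colon_le_trace Cc)).
exists i' => // j Jj; have [i'' _ E''] := IIu _ (ideal_mul_gen Ii (colon_hom_trace Cc Jj)).
exists i''; apply: (nzd_mulI nu) => /=.
rewrite mulrA -E mul1r -mulrA (colon_homP Cc Jj) mulrA -[i * _]mul1r E''.
by rewrite mulrA.
Qed.

Lemma trace_eq_colon_of_le : ideal_le I C -> ideal_eq I C.
Proof. by move=> IC r; split; [apply: IC | apply: colon_le_trace]. Qed.

Section Reduction.
Variable n : nat.
Hypothesis reduction :
  forall r, ideal_pow J n.+1 r <-> exists y, ideal_pow J n y /\ r = x * y.

Lemma reduction_scaled_le : scaled_le 1 (ideal_pow J n.+1) x (ideal_pow J n).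
Proof. by move=> r /reduction [y [Jy ->]]; exists y; rewrite ?mul1r. Qed.

Lemma trace_pow_le_colon : ideal_le (ideal_pow I n.+1) (ideal_mul (ideal_pow I n) C).
Proof.
have xI_JC : scaled_le (x ^+ n.+1) (ideal_pow I n.+1)
                       1 (ideal_mul (ideal_pow J n.+1) (ideal_pow C n.+1)).
  have := scaled_le_pow (n := n.+1) trace_scaled_le_mul_colon; rewrite expr1n.
  by apply: scaled_leW => // r /ideal_pow_mul.
have JC_xJC : scaled_le 1 (ideal_mul (ideal_pow J n.+1) (ideal_pow C n.+1))
                        x (ideal_mul (ideal_mul (ideal_pow J n) (ideal_pow C n)) C).
  apply: scaled_leW (scaled_le_mulr (S := ideal_pow C n.+1) reduction_scaled_le) => //.
  by move=> r /ideal_mulA.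
have JC_xI : scaled_le 1 (ideal_mul (ideal_mul (ideal_pow J n) (ideal_pow C n)) C)
                       (x ^+ n) (ideal_mul (ideal_pow I n) C).
  have := scaled_le_pow (n := n) mul_colon_scaled_le_trace; rewrite expr1n => JCn.
  by apply: scaled_le_mulr; apply: scaled_leW JCn => // r /ideal_pow_mul.
apply: scaled_le1; apply: (scaled_le_cancel (k := x ^+ n.+1)); first exact: nzdX.
by have := scaled_le_trans (scaled_le_trans xI_JC JC_xJC) JC_xI; rewrite !mulr1 mul1r -exprS.
Qed.

Lemma trace_eq_colon_of_iso : ideal_iso I C -> ideal_eq I C.
Proof.
have C_ideal := colon_is_ideal J (principal_is_ideal x).
move=> /(ideal_iso_scaled (trace_is_ideal J_ideal) (ideal_le_trace Jx) x_nzd).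
move=> [a [na aIxC xCaI]].
have aJC : scaled_le a (ideal_mul J C) (x * x) C.
  by have := scaled_le_trans mul_colon_scaled_le_trace aIxC; rewrite mul1r.
have xxC : scaled_le (x * x) C a (ideal_mul J C).
  by have := scaled_le_trans xCaI trace_scaled_le_mul_colon; rewrite mulr1.
have xCaC : scaled_le x C a C.
  pose k := (x * x) ^+ n * a ^+ n * x.
  apply: (scaled_le_cancel (k := k)).
    by apply: nzdM => //; apply: nzdM; apply: nzdX => //; apply: nzdM.
  have -> : k * x = (x * x) ^+ n.+1 * 1 * a ^+ n by rewrite /k exprS; ring.
  have -> : k * a = a ^+ n.+1 * x * (x * x) ^+ n by rewrite /k exprS; ring.
  exact: scaled_le_trans (scaled_le_trans (scaled_le_pow_mul_r n.+1 C_ideal xxC)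
           (scaled_le_mulr reduction_scaled_le)) (scaled_le_pow_mul_l C_ideal aJC).
have JCxC : scaled_le 1 (ideal_mul J C) x C.
  apply: (scaled_le_cancel (k := a * x)); first exact: nzdM.
  by have := scaled_le_trans aJC xCaC; rewrite mulr1 [x * x * a]mulrC mulrA.
apply: trace_eq_colon_of_le; apply: scaled_le1; apply: (scaled_le_cancel x_nzd).
by have := scaled_le_trans trace_scaled_le_mul_colon JCxC; rewrite mul1r !mulr1.
Qed.

Lemma trace_eq_colon_of_iso_sq : fg_ideal I -> ideal_iso I (ideal_mul I I) -> ideal_eq I C.
Proof.
have I_ideal := trace_is_ideal J_ideal; have Ix := ideal_le_trace Jx.
have C_ideal := colon_is_ideal J (principal_is_ideal x).
move=> fgI /(ideal_iso_scaled I_ideal Ix x_nzd) [e [_ eI_xII xII_eI]].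
have [d Id x3] := xII_eI _ (ideal_mul_gen Ix Ix).
have x2I : scaled_le (x ^+ 2) I d (ideal_mul I I).
  apply: (scaled_le_cancel (k := x)) => //.
  by have := scaled_leZ d eI_xII; rewrite mulrC -x3 -exprS mulrC.
have IIx2 : scaled_le d (ideal_mul I I) (x ^+ 2) I.
  apply: (scaled_le_cancel (k := x)) => //.
  by have := scaled_leZ d xII_eI; rewrite [d * e]mulrC -x3 -exprS mulrC.
have [u Iu x2E] := determinant_trick I_ideal fgI (ex_intro _ x (conj Ix x_nzd))
  (nzdX x_nzd) x2I IIx2.
have ndu : nzd (d * u) by rewrite -x2E; apply: nzdX.
have IIu : scaled_le 1 (ideal_mul I I) u I.
  by apply: (scaled_le_cancel (k := d)); [exact: nzdMl ndu | rewrite mulr1 -x2E].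
have ICu := scaled_le_pow_mul_l (n := n) C_ideal (trace_mul_colon_le (nzdMr ndu) IIu).
apply: trace_eq_colon_of_le => r Ir.
have /trace_pow_le_colon /ICu := ideal_mul_gen (ideal_pow_exp n Iu) Ir.
by rewrite expr1n mul1r => -[c Cc /(nzd_mulI (nzdX (nzdMr ndu))) ->].
Qed.

End Reduction.

End ColonTrace.

Lemma principal_reduction_nzd (R : comUnitRingType) (J : R -> Prop) (x : R) :
  regular_ideal J -> principal_reduction x J -> nzd x.
Proof.
move=> [a [Ja na]] [_ [n red]] b xb.
have [y [_ E]] := (red _).1 (ideal_pow_exp n.+1 Ja).
by apply: (nzdX (n := n.+1) na); rewrite E mulrAC xb mul0r.
Qed.

Theorem proposition3p8 (R : comUnitRingType) (J : R -> Prop) (x : R) :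
  CM_local_dim_one R ->
  is_ideal J -> regular_ideal J -> principal_reduction x J ->
  let I := trace_ideal J in
  let C := colon (principal x) J in
  (ideal_iso I (ideal_mul I I) -> ideal_eq I C) /\
  (ideal_eq I C <-> ideal_iso I C) /\
  (ideal_iso I C <-> iso_dual I J).
Proof.
move=> [noeth _ _ _] J_ideal J_reg red I C.
have x_nzd := principal_reduction_nzd J_reg red.
have [Jx [n {}red]] := red.
split; first exact/trace_eq_colon_of_iso_sq/noeth/trace_is_ideal.
split; last exact: ideal_iso_colon_iff_dual.
by split; [apply: ideal_eq_iso | apply: trace_eq_colon_of_iso red].
Qed.
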